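(* For every state $s\in S$, the number of actions $I$ occurring in the unique path $\underline\alpha(s)$ equals the class $K(s)$.
   Context: Fix integers $M\ge1$, $q\ge 2$. The augmented state set is $\overline S=\{(b_1,\dots,b_M,d;T,t): b_m,d,T\in\mathbb Z,\ 1\le t\le M+1,\ d+T+\sum_{m=1}^M b_m=0\}$, the BDM state set is $S=\{s\in\overline S:0\le T\le M\}$, initial state $s_0=(0,\dots,0,0;0,M+1)$. Feasible transitions from $s=(b_1,\dots,b_M,d;T,t)\in S$: if $t\le M$ and $b_t>d$, action $D$ to $(b_1,\dots,b_{t-1},d,b_{t+1},\dots,b_M,b_t;T,t+1)$ or action $I$ to $(b_1,\dots,b_M,d;T,t+1)$; if $t\le M$ and $b_t=d$, action $N_=$ to $(b_1,\dots,b_M,d;T,t+1)$; if $t\le M$ and $b_t<d$, action $N_<$ to $(b_1,\dots,b_M,d;T,t+1)$; if $t=M+1,T<M$, action $d_-$ to $(b_1,\dots,b_M,d-1;T+1,1)$; if $t=M+1,T=M$, action $b_+$ to $(b_1+1,\dots,b_M+1,d;0,1)$. For each $s\in S$ there is exactly one finite path of feasible transitions from $s_0$ to $s$ that uses only actions from $\{D,I,N_=,d_-,b_+\}$ and visits $s_0$ only at its start; call it $\underline\alpha(s)$. For $s\in\overline S$ let $x=(b_1,\dots,b_{t-1},d,b_t,\dots,b_M)$, $\tilde b_1\ge\dots\ge\tilde b_{M+1}$ its entries sorted nonincreasingly, $\pi_s$ the minimum number of neighbouring transpositions sorting $x$ nonincreasingly, and $K(s)=-\pi_s+MT+2\sum_{m=1}^{M+1}\tilde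 b_m(M+1-m)$ the class of $s$. *)

From mathcomp Require Import all_boot all_order all_algebra.
Set Implicit Arguments. Unset Strict Implicit. Unset Printing Implicit Defensive.
Import Order.TTheory GRing.Theory Num.Theory.
Local Open Scope ring_scope.

(* A state (b_1..b_M, d; T, t); bs is the list [b_1; ...; b_M]. *)
Record state := mkState { bs : seq int; dd : int; TT : int; tt : nat }.

Definition inSbar (M : nat) (s : state) : Prop :=
  size (bs s) = M /\ (1 <= tt s <= M.+1)%N /\ dd s + TT s + \sum_(b <- bs s) b = 0.

Definition inS (M : nat) (s : state) : Prop :=
  inSbar M s /\ 0 <= TT s /\ TT s <= M%:Z.

Definition s0 (M : nat) : state := mkState (nseq M 0) 0 0 M.+1.

Inductive action := aD | aI | aNeq | aNlt | aDminus | aBplus.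

Definition next (M : nat) (s : state) (a : action) : option state :=
  let t := tt s in
  if (t <= M)%N then
    let bt := nth 0 (bs s) t.-1 in
    match a with
    | aD => if dd s < bt then Some (mkState (set_nth 0 (bs s) t.-1 (dd s)) bt (TT s) t.+1) else None
    | aI => if dd s < bt then Some (mkState (bs s) (dd s) (TT s) t.+1) else None
    | aNeq => if bt == dd s then Some (mkState (bs s) (dd s) (TT s) t.+1) else None
    | aNlt => if bt < dd s then Some (mkState (bs s) (dd s) (TT s) t.+1) else None
    | _ => None
    end
  else if t == M.+1 then
    match a with
    | aDminus => if TT s < M%:Z then Some (mkState (bs s) (dd s - 1) (TT s + 1) 1) else None
    | aBplus => if TT s == M%:Z then Some (mkState (map (fun b => b + 1) (bs s)) (dd s) 0 1) else None
    | _ => None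
    end
  else None.

(* a path of feasible transitions from cur to target; p lists (action, reached state);
   every reached state is different from s0 (s0 is visited only at the start) *)
Fixpoint is_path (M : nat) (cur : state) (p : seq (action * state)) (target : state) : Prop :=
  match p with
  | [::] => cur = target
  | (a, s') :: p' => inS M cur /\ next M cur a = Some s' /\ s' <> s0 M /\ is_path M s' p' target
  end.

(* the actions allowed in underline-alpha: D, I, N_=, d_-, b_+ *)
Definition allowed (a : action) : bool := if a is aNlt then false else true.
Definition isI (a : action) : bool := if a is aI then true else false.

Definition xseq (s : state) : seq int :=
  take (tt s).-1 (bs s) ++ dd s :: drop (tt s).-1 (bs s).

Definition geZ (a b : int) : bool := b <= a.

Definition swap_adj (i : nat) (x : seq int) : seq int :=
  take i x ++ [:: nth 0 x i.+1; nth 0 x i] ++ drop i.+2 x.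

Definition apply_swaps (x : seq int) (l : seq nat) : seq int :=
  foldl (fun y i => swap_adj i y) x l.

Definition swaps_ok (x : seq int) (l : seq nat) : bool :=
  all (fun i => i.+1 < size x)%N l.

Definition min_swaps (x : seq int) (n : nat) : Prop :=
  (exists l, swaps_ok x l /\ size l = n /\ sorted geZ (apply_swaps x l)) /\
  (forall l, swaps_ok x l -> sorted geZ (apply_swaps x l) -> (n <= size l)%N).

Definition classK (M : nat) (s : state) (n : nat) : int :=
  let tb := sort geZ (xseq s) in
  - n%:Z + M%:Z * TT s + 2 * \sum_(i < M.+1) nth 0 tb i * (M - i)%:Z.

From Pilot Require Import Defs.
From mathcomp Require Import all_boot all_order all_algebra.
From mathcomp Require Import zify ring.
Import Order.TTheory GRing.Theory Num.Theory.
Local Open Scope ring_scope.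

(* Consider Phi(s) = - inv(x) + M T + sum_(i != j) max(x_i, x_j), where inv(x)
   counts the pairs i < j with x_i < x_j.  The number inv(x) is the least number
   of adjacent transpositions sorting x nonincreasingly, and on the sorted list
   the double sum is 2 sum_m tb_m (M + 1 - m), so Phi(s) = K(s).  Phi vanishes at
   s0 and every action other than N_< raises it by 1 for I and by 0 otherwise:
   D and N_= leave x unchanged, I swaps d with a larger b_t and so removes one
   inversion, d_- moves d from the last to the first place lowered by 1, which the
   increment of T compensates exactly, and b_+ is such a move followed by adding
   1 to every entry, which adds M (M + 1) to the double sum while T drops from
   M + 1 to 0. *)

Fixpoint inversions (x : seq int) : nat :=
  if x is a :: l then addn (count (fun y => a < y) l) (inversions l) else 0%N.

Lemma inversions_swap pre a b post :
  (inversions (pre ++ a :: b :: post) + (b < a)%R)%N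
  = (inversions (pre ++ b :: a :: post) + (a < b)%R)%N.
Proof. elim: pre => [|c pre IH] /=; rewrite ?count_cat /=; lia. Qed.

Lemma inversions_rcons x d :
  inversions (rcons x d) = (inversions x + count (fun y => (y < d)%R) x)%N.
Proof. by elim: x => //= a x ->; rewrite -cats1 count_cat /= addn0 addnACA. Qed.

Lemma inversions_shift x : inversions (map (fun y => y + 1) x) = inversions x.
Proof.
elim: x => //= a x ->; rewrite count_map; congr (_ + _)%N.
by apply: eq_count => y /=; rewrite ltrD2r.
Qed.

Lemma geZ_trans : transitive geZ.
Proof. by move=> b a c; rewrite /geZ => /[swap]; apply: le_trans. Qed.

Lemma geZ_total : total geZ.
Proof. by move=> a b; rewrite /geZ orbC le_total. Qed.

Lemma inversions_eq0 x : (inversions x == 0%N) = sorted geZ x.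
Proof.
elim: x => //= a x IH; rewrite addn_eq0 IH (path_sortedE geZ_trans).
congr (_ && _); rewrite eqn0Ngt -has_count -all_predC.
by apply: eq_all => y; rewrite /= -leNgt.
Qed.

Lemma swap_adjE [i : nat] [x : seq int] : (i.+1 < size x)%N ->
  x = take i x ++ nth 0 x i :: nth 0 x i.+1 :: drop i.+2 x.
Proof.
by move=> lt_ix; rewrite -(drop_nth 0 lt_ix) -(drop_nth 0 (ltnW lt_ix)) cat_take_drop.
Qed.

Lemma size_swap_adj [i : nat] [x : seq int] : (i.+1 < size x)%N -> size (swap_adj i x) = size x.
Proof. by move=> lt_ix; rewrite [in RHS](swap_adjE lt_ix) !size_cat. Qed.

Lemma inversions_swap_adj [i : nat] [x : seq int] : (i.+1 < size x)%N ->
  (inversions x + (nth 0 x i.+1 < nth 0 x i)%R)%N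
  = (inversions (swap_adj i x) + (nth 0 x i < nth 0 x i.+1)%R)%N.
Proof. by move=> lt_ix; rewrite {1}(swap_adjE lt_ix) inversions_swap. Qed.

Lemma inversions_apply_swaps [x : seq int] [l : seq nat] : swaps_ok x l ->
  (inversions x <= size l + inversions (apply_swaps x l))%N.
Proof.
elim: l x => [|i l IH] x //= /andP[lt_ix ok_l].
have := inversions_swap_adj lt_ix.
have := IH (swap_adj i x); rewrite /swaps_ok size_swap_adj // => /(_ ok_l).
by case: (_ < _)%R; case: (_ < _)%R => /=; lia.
Qed.

Lemma not_sorted_ascent x : ~~ sorted geZ x ->
  exists2 i, (i.+1 < size x)%N & nth 0 x i < nth 0 x i.+1.
Proof.
elim: x => // a [//|b x] IH /=; rewrite negb_and /geZ -ltNge.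
case/orP=> [lt_ab | /IH[i lt_ix asc_i]]; first by exists 0%N.
by exists i.+1.
Qed.

Lemma sorting_swaps x :
  exists l, [/\ swaps_ok x l, size l = inversions x & sorted geZ (apply_swaps x l)].
Proof.
move: {2}(inversions x) (erefl (inversions x)) => n.
elim: n x => [|n IH] x inv_x.
  by exists [::]; split=> //; rewrite -inversions_eq0 inv_x.
have [i lt_ix asc_i] : exists2 i, (i.+1 < size x)%N & nth 0 x i < nth 0 x i.+1.
  by apply: not_sorted_ascent; rewrite -inversions_eq0 inv_x.
have inv_swap : inversions (swap_adj i x) = n.
  by have := inversions_swap_adj lt_ix; rewrite asc_i (lt_gtF asc_i) inv_x; lia.
have [l [ok_l size_l sorted_l]] := IH _ inv_swap.
exists (i :: l); split=> //=; last by rewrite size_l inv_swap.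
by rewrite lt_ix /swaps_ok -(size_swap_adj lt_ix).
Qed.

Lemma min_swaps_inversions [x n] : min_swaps x n -> n = inversions x.
Proof.
move=> [[l [ok_l [<- sorted_l]]] minimal].
have [l' [ok_l' size_l' sorted_l']] := sorting_swaps x.
have := inversions_apply_swaps ok_l.
move: sorted_l; rewrite -inversions_eq0 => /eqP ->.
have := minimal _ ok_l' sorted_l'; lia.
Qed.

(* The sum of max(x_i, x_j) over ordered pairs of distinct positions. *)
Definition max_pair_sum (x : seq int) : int :=
  \sum_(a <- x) \sum_(b <- x) Num.max a b - \sum_(a <- x) a.

Lemma max_pair_sum_perm [x y : seq int] : perm_eq x y -> max_pair_sum x = max_pair_sum y.
Proof.
move=> pxy; rewrite /max_pair_sum !(perm_big y pxy) /=.
by congr (_ - _); apply: eq_bigr => a _; apply: perm_big.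
Qed.

Lemma max_pair_sum_cons c x :
  max_pair_sum (c :: x) = 2 * \sum_(b <- x) Num.max c b + max_pair_sum x.
Proof.
rewrite /max_pair_sum !big_cons maxxx.
under [\sum_(a <- x) \sum_(b <- c :: x) _]eq_bigr do rewrite big_cons maxC.
rewrite big_split /=; ring.
Qed.

Lemma sum_max_ge a x : all (geZ a) x -> \sum_(b <- x) Num.max a b = a * (size x)%:Z.
Proof.
elim: x => [|b x IH] /=; first by rewrite big_nil mulr0.
by case/andP=> ge_ab /IH; rewrite big_cons max_l // => ->; rewrite intS; ring.
Qed.

Lemma max_pair_sum_sorted x : sorted geZ x ->
  max_pair_sum x = 2 * \sum_(i < size x) nth 0 x i * ((size x).-1 - i)%:Z.
Proof.
elim: x => [|a x IH] sorted_ax; first by rewrite /max_pair_sum !big_nil big_ord0.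
rewrite max_pair_sum_cons IH ?(path_sorted sorted_ax) //.
rewrite sum_max_ge; last exact: order_path_min geZ_trans sorted_ax.
rewrite big_ord_recl subn0 mulrDr; congr (_ + _).
by congr (_ * _); apply: eq_bigr => i _; rewrite lift0 /= subnS predn_sub.
Qed.

Lemma sum_max_shift a (x : seq int) :
  \sum_(b <- x) Num.max (a + 1) (b + 1) = \sum_(b <- x) Num.max a b + (size x)%:Z.
Proof.
elim: x => [|b x IH]; first by rewrite !big_nil.
by rewrite !big_cons IH -addr_maxl intS; ring.
Qed.

Lemma max_pair_sum_shift (x : seq int) :
  max_pair_sum (map (fun a => a + 1) x) = max_pair_sum x + (size x)%:Z ^+ 2 - (size x)%:Z.
Proof.
elim: x => [|a x IH]; first by rewrite /max_pair_sum !big_nil.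
by rewrite /= !max_pair_sum_cons IH big_map sum_max_shift intS; ring.
Qed.

Lemma sum_max_pred c (x : seq int) :
  \sum_(b <- x) Num.max c b = \sum_(b <- x) Num.max (c - 1) b + (count (fun b => b < c) x)%:Z.
Proof.
elim: x => [|b x IH] /=; first by rewrite !big_nil.
rewrite !big_cons IH PoszD !maxElt ltrBlDr ltzD1.
case: (ltP b c) => [lt_bc | le_cb]; first by rewrite (lt_gtF lt_bc) /=; ring.
case: ltP => [_ | le_bc] /=; first ring.
have -> : b = c by apply/eqP; rewrite eq_le le_bc le_cb.
ring.
Qed.

Lemma max_pair_sum_sort x :
  max_pair_sum x = 2 * \sum_(i < size x) nth 0 (sort geZ x) i * ((size x).-1 - i)%:Z.
Proof.
rewrite -(max_pair_sum_perm (permEl (perm_sort geZ x))).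
by rewrite max_pair_sum_sorted ?sort_sorted ?size_sort //; apply: geZ_total.
Qed.

Definition potential (M : nat) (s : state) : int :=
  - (inversions (xseq s))%:Z + M%:Z * TT s + max_pair_sum (xseq s).

Lemma size_xseq s : size (xseq s) = (size (bs s)).+1.
Proof. by rewrite /xseq size_cat /= addnS -size_cat cat_take_drop. Qed.

Lemma classK_potential M s : size (bs s) = M ->
  classK M s (inversions (xseq s)) = potential M s.
Proof. by move=> size_b; rewrite /classK /potential max_pair_sum_sort size_xseq size_b. Qed.

Lemma xseq_cat pre post d T :
  xseq (mkState (pre ++ post) d T (size pre).+1) = pre ++ d :: post.
Proof. by rewrite /xseq /= take_size_cat // drop_size_cat. Qed.

Lemma xseq_rcons_cat pre y post d T :
  xseq (mkState (rcons pre y ++ post) d T (size pre).+2) = pre ++ y :: d :: post.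
Proof. by rewrite -(size_rcons pre y) xseq_cat cat_rcons. Qed.

Lemma set_nth_cat_cons (pre post : seq int) x d :
  set_nth 0 (pre ++ x :: post) (size pre) d = rcons pre d ++ post.
Proof. by rewrite cat_rcons; elim: pre => //= a pre ->. Qed.

Lemma potential_next_low M (pre post : seq int) x d T a s' :
  (size pre < M)%N -> allowed a ->
  Defs.next M (mkState (pre ++ x :: post) d T (size pre).+1) a = Some s' ->
  potential M s' = potential M (mkState (pre ++ x :: post) d T (size pre).+1) + (isI a)%:Z.
Proof.
move=> lt_preM; rewrite /potential /Defs.next /= lt_preM nth_cat ltnn subnn xseq_cat.
case: a => //= _.
- case: ifP => // _ [<-].
  by rewrite set_nth_cat_cons xseq_rcons_cat addr0.
- case: ifP => // lt_dx [<-]; rewrite -cat_rcons xseq_rcons_cat.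
  have := inversions_swap pre d x post; rewrite lt_dx (lt_gtF lt_dx) /=.
  have -> : max_pair_sum (pre ++ x :: d :: post) = max_pair_sum (pre ++ d :: x :: post).
    by apply: max_pair_sum_perm; rewrite perm_cat2l (perm_catCA [:: x] [:: d]).
  lia.
- case: ifP => // /eqP eq_xd [<-].
  by rewrite -cat_rcons xseq_rcons_cat eq_xd addr0.
Qed.

Lemma xseq_last b d T : xseq (mkState b d T (size b).+1) = rcons b d.
Proof. by rewrite /xseq /= take_oversize // drop_oversize // cats1. Qed.

Lemma xseq_first b d T : xseq (mkState b d T 1) = d :: b.
Proof. by rewrite /xseq /= take0 drop0. Qed.

Lemma potential_rotate b d T :
  potential (size b) (mkState b (d - 1) (T + 1) 1)
  = potential (size b) (mkState b d T (size b).+1).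
Proof.
rewrite /potential xseq_first xseq_last /= inversions_rcons.
rewrite (max_pair_sum_perm (permEl (perm_rcons d b))) !max_pair_sum_cons.
rewrite (sum_max_pred d b).
have count_ge : count (fun y => d - 1 < y) b = count (predC (fun y => y < d)) b.
  by apply: eq_count => y; rewrite /= ltrBlDr ltzD1 leNgt.
rewrite -(count_predC (fun y => y < d) b) -count_ge !PoszD; ring.
Qed.

Lemma potential_shift b d :
  potential (size b) (mkState (map (fun y => y + 1) b) d 0 1)
  = potential (size b) (mkState b (d - 1) ((size b)%:Z + 1) 1).
Proof.
rewrite /potential !xseq_first.
have -> : d :: map (fun y => y + 1) b = map (fun y => y + 1) (d - 1 :: b) by rewrite /= subrK.
by rewrite inversions_shift max_pair_sum_shift /= intS; ring.
Qed.

Lemma potential_next_high b d T a s' : allowed a ->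
  Defs.next (size b) (mkState b d T (size b).+1) a = Some s' ->
  potential (size b) s' = potential (size b) (mkState b d T (size b).+1) + (isI a)%:Z.
Proof.
rewrite /Defs.next /= ltnn eqxx; case: a => //= _.
- by case: ifP => // _ [<-]; rewrite addr0 potential_rotate.
- case: ifP => // /eqP eq_T [<-].
  by rewrite addr0 potential_shift -eq_T potential_rotate.
Qed.

Lemma potential_next [M s a s'] : inS M s -> allowed a ->
  Defs.next M s a = Some s' -> potential M s' = potential M s + (isI a)%:Z.
Proof.
case: s => b d T t [[/= size_b [/= /andP[t_gt0 t_le] _]] _].
have [le_tM | lt_Mt] := leqP t M; last first.
  have -> : t = M.+1 by lia.
  rewrite -size_b; exact: potential_next_high.
have lt_pred_t : (t.-1 < size b)%N by lia.
have def_b : b = take t.-1 b ++ nth 0 b t.-1 :: drop t b.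
  by rewrite -{1}(cat_take_drop t.-1 b) (drop_nth 0 lt_pred_t) prednK.
have def_t : t = (size (take t.-1 b)).+1 by rewrite size_take lt_pred_t prednK.
have lt_preM : (size (take t.-1 b) < M)%N by rewrite -def_t.
move: lt_preM def_b def_t; move: (take t.-1 b) (nth 0 b t.-1) (drop t b).
by move=> pre x post lt_preM -> ->; apply: potential_next_low.
Qed.

Lemma potential_path [M s p s'] : is_path M s p s' -> all allowed (map fst p) ->
  potential M s' = potential M s + (count isI (map fst p))%:Z.
Proof.
elim: p s => [|[a s1] p IH] s /=; first by move=> ->; rewrite addr0.
case=> s_in [next_s [_ path_p]] /andP[ok_a ok_p].
by rewrite (IH _ path_p ok_p) (potential_next s_in ok_a next_s) PoszD addrA.
Qed.

Lemma inversions_nseq0 n : inversions (nseq n 0) = 0%N.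
Proof. by elim: n => //= n ->; rewrite count_nseq. Qed.

Lemma max_pair_sum_nseq0 n : max_pair_sum (nseq n 0) = 0.
Proof.
elim: n => [|n IH]; first by rewrite /max_pair_sum !big_nil.
by rewrite /= max_pair_sum_cons IH big1_seq ?mulr0 ?addr0 // => y /andP[_ /nseqP[-> _]].
Qed.

Lemma potential_s0 M : potential M (s0 M) = 0.
Proof.
have x0 : xseq (s0 M) = nseq M.+1 0.
  have := xseq_last (nseq M 0) 0 0; rewrite size_nseq => ->.
  by rewrite -cats1 -[[:: 0]]/(nseq 1 0) -nseqD addn1.
by rewrite /potential x0 inversions_nseq0 max_pair_sum_nseq0 mulr0; ring.
Qed.

Theorem mainTheorem5 (M q : nat) (hM : (1 <= M)%N) (hq : (2 <= q)%N)
  (s : state) (hs : inS M s)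
  (p : seq (action * state)) (hp : is_path M (s0 M) p s)
  (hallowed : all allowed (map fst p))
  (pi_s : nat) (hpi : min_swaps (xseq s) pi_s) :
  (count isI (map fst p))%:Z = classK M s pi_s.
Proof.
have [[size_b _] _] := hs.
rewrite (min_swaps_inversions hpi) classK_potential //.
by rewrite (potential_path hp hallowed) potential_s0 add0r.
Qed.
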